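(* Let $q>1$ and $n>1$ be integers, let $q'\ge 2q-1$ be an integer with $q'>q$, and let $S=(s_i)$ be an $\mathcal{OS}_q(n)$ of period $m$ with ring sequence $[s_0,\ldots,s_{m-1}]$. Let $S'$ be the periodic sequence over $\mathbb{Z}_{q'}$ with ring sequence $[s_0',\ldots,s_{m-1}']$, where for $x\in\mathbb{Z}_q$, $x'$ denotes the residue class in $\mathbb{Z}_{q'}$ of the unique integer in $\{0,1,\ldots,q-1\}$ belonging to the class $x$. Then $S'$ is an $\mathcal{SOS}_{q'}(n)$.
   Context: For a periodic sequence $S=(s_i)$ over $\mathbb{Z}_q$ write $\mathbf{s}_n(i)=(s_i,\ldots,s_{i+n-1})$; for an $n$-tuple $\mathbf{u}=(u_0,\ldots,u_{n-1})$, $\mathbf{u}^R=(u_{n-1},\ldots,u_0)$ and $-\mathbf{u}=(-u_0,\ldots,-u_{n-1})$. A $q$-ary $n$-window sequence of period $m$ is a periodic sequence with $\mathbf{s}_n(i)=\mathbf{s}_n(j)\Rightarrow i\equiv j\pmod m$. An $\mathcal{OS}_q(n)$ is an $n$-window sequence with $\mathbf{s}_n(i)\neq\mathbf{s}_n(j)^R$ for all $i,j$; an $\mathcal{SOS}_q(n)$ is an $\mathcal{OS}_q(n)$ that additionally satisfies $\mathbf{s}_n(i)\neq-\mathbf{s}_n(j)^R$ for all $i,j$. The ring sequence $[a_0,\ldots,a_{m-1}]$ of a sequence of period $m$ is one period, i.e. the sequence is given by $s_{i+tm}=a_i$. *)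

From HB Require Import structures.
From mathcomp Require Import all_boot all_order all_algebra.
Set Implicit Arguments. Unset Strict Implicit. Unset Printing Implicit Defensive.
Import GRing.Theory.

Definition window (T : Type) (s : nat -> T) (n i : nat) : seq T :=
  [seq s (i + k) | k <- iota 0 n].

Definition periodic (T : Type) (s : nat -> T) (m : nat) : Prop :=
  (0 < m)%N /\ forall i, s (i + m) = s i.

Definition is_window_seq (T : eqType) (n m : nat) (s : nat -> T) : Prop :=
  periodic s m /\
  forall i j, window s n i = window s n j -> i = j %[mod m].

Definition is_OS (T : eqType) (n m : nat) (s : nat -> T) : Prop :=
  is_window_seq n m s /\
  forall i j, window s n i <> rev (window s n j).

Definition is_SOS (T : zmodType) (n m : nat) (s : nat -> T) : Prop :=
  is_OS n m s /\
  forall i j, window s n i <> map (fun x => - x)%R (rev (window s n j)).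

Definition ring_seq (T : Type) (m : nat) (a : nat -> T) : nat -> T :=
  fun i => a (i %% m).

(* Lifting x to the integer in [0, q) and reducing mod q' >= q is injective, so windows stay
   distinct and the reversal condition is inherited.  A negated reversed window is impossible
   too: x' = - y' means x + y = 0 mod q', and 0 <= x + y <= 2q - 2 < q' forces x = y = 0, so
   such a window would be the reversal of another window of S itself. *)

From mathcomp Require Import all_boot all_order all_algebra.
From mathcomp Require Import zify.
From Stdlib Require Import FunctionalExtensionality.
Import GRing.Theory.

Set Implicit Arguments.
Unset Strict Implicit.
Unset Printing Implicit Defensive.

Lemma window_comp (T U : Type) (f : T -> U) (s : nat -> T) n i :
  window (f \o s) n i = map f (window s n i).
Proof. by rewrite /window -map_comp. Qed.

Lemma eq_map_oppr (T : Type) (U : zmodType) (f : T -> U) :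
  (forall x y, (f x = - f y)%R -> x = y) ->
  forall u v, map f u = map (fun x => - x)%R (map f v) -> u = v.
Proof. by move=> fN; elim=> [|x u IHu] [|y v] //= [/fN -> /IHu ->]. Qed.

Lemma periodic_mod (T : Type) (s : nat -> T) m i : periodic s m -> s (i %% m) = s i.
Proof.
case=> _ sm; rewrite [in RHS](divn_eq i m) addnC.
by elim: (i %/ m) => [|k IHk]; rewrite ?mul0n ?addn0 // mulSnr addnA sm.
Qed.

Lemma ring_seq_periodic (T : Type) (s : nat -> T) m : periodic s m -> ring_seq m s = s.
Proof. by move=> sm; apply: functional_extensionality => i; exact: periodic_mod. Qed.

Section MapSequence.
Variables (T : eqType) (n m : nat) (s : nat -> T).

Lemma periodic_comp (U : Type) (f : T -> U) : periodic s m -> periodic (f \o s) m.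
Proof. by case=> m_gt0 sm; split=> // i; rewrite /= sm. Qed.

Lemma is_window_seq_comp (U : eqType) (f : T -> U) :
  injective f -> is_window_seq n m s -> is_window_seq n m (f \o s).
Proof.
move=> f_inj [sm win]; split; first exact: periodic_comp.
by move=> i j; rewrite !(window_comp f s) => /(inj_map f_inj); exact: win.
Qed.

Lemma is_OS_comp (U : eqType) (f : T -> U) :
  injective f -> is_OS n m s -> is_OS n m (f \o s).
Proof.
move=> f_inj [win noR]; split; first exact: is_window_seq_comp.
by move=> i j; rewrite !(window_comp f s) -map_rev => /(inj_map f_inj); exact: noR.
Qed.

Lemma is_SOS_comp (U : zmodType) (f : T -> U) :
  injective f -> (forall x y, (f x = - f y)%R -> x = y) ->
  is_OS n m s -> is_SOS n m (f \o s).
Proof.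
move=> f_inj fN sOS; split; first exact: is_OS_comp.
move=> i j; rewrite !(window_comp f s) -map_rev => /(eq_map_oppr fN).
exact: sOS.2.
Qed.

End MapSequence.

Section LiftZp.
Variables (q q' : nat).
Hypothesis q_gt1 : (1 < q)%N.

Definition Zp_lift (x : 'Z_q) : 'Z_q' := ((x : nat)%:R)%R.

Lemma ltn_Zp (x : 'Z_q) : (x < q)%N.
Proof. by rewrite -[q in (_ < q)%N](Zp_cast q_gt1). Qed.

Lemma val_Zp_lift x : (q <= q')%N -> Zp_lift x = x :> nat.
Proof.
move=> le_qq'; rewrite val_Zp_nat ?modn_small //; first exact: leq_trans (ltn_Zp x) _.
exact: leq_trans le_qq'.
Qed.

Lemma Zp_lift_inj : (q <= q')%N -> injective Zp_lift.
Proof. by move=> le_qq' x y /(congr1 (@nat_of_ord _)); rewrite !val_Zp_lift // => /val_inj. Qed.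

Lemma Zp_lift_eqN x y : (2 * q - 1 <= q')%N -> (Zp_lift x = - Zp_lift y)%R -> x = y.
Proof.
move=> le_2q_q' /eqP; rewrite -subr_eq0 opprK -natrD => /eqP/(congr1 (@nat_of_ord _)).
have x_lt := ltn_Zp x; have y_lt := ltn_Zp y.
rewrite val_Zp_nat /= ?modn_small; [|lia|lia].
by move=> xy0; apply: val_inj; rewrite /=; lia.
Qed.

End LiftZp.

Theorem theorem3p2 (q n q' m : nat) (s : nat -> 'Z_q) :
  (1 < q)%N -> (1 < n)%N -> (2 * q - 1 <= q')%N -> (q < q')%N ->
  is_OS n m s ->
  is_SOS n m (ring_seq m (fun i => ((nat_of_ord (s i))%:R : 'Z_q')%R)).
Proof.
move=> q_gt1 _ le_2q_q' /ltnW le_qq' sOS.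
have lift_sm : periodic (Zp_lift q' \o s) m by apply: periodic_comp; case: sOS => [[]].
have -> : ring_seq m (fun i => ((nat_of_ord (s i))%:R : 'Z_q')%R) = Zp_lift q' \o s.
  exact: ring_seq_periodic.
apply: is_SOS_comp (Zp_lift_inj q_gt1 le_qq') _ sOS => x y.
exact: Zp_lift_eqN.
Qed.
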